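(* Let $\mathcal{J}$ (true jobs) and $\hat{\mathcal{J}}$ (predicted jobs, $\mathtt{OPT}(\hat{\mathcal{J}})>0$) be given and suppose $\eta_2\le 1$. Then $\mathtt{OPT}(\mathcal{J}\cap\hat{\mathcal{J}})\ge\big(1-\eta_2^{1/\alpha}\big)^\alpha\,\mathtt{OPT}(\hat{\mathcal{J}})$. Moreover, let OfflineAlg be an offline algorithm that is $\gamma_{\mathrm{off}}$-competitive, i.e. $\mathtt{OFF}(\mathcal{K}):=\mathrm{cost}(\textsc{OfflineAlg}(\mathcal{K}),\mathcal{K})\le\gamma_{\mathrm{off}}\,\mathtt{OPT}(\mathcal{K})$ for every job set $\mathcal{K}$, and let $\lambda\in(0,1]$ with $\lambda\gamma_{\mathrm{off}}\le1$. If $\mathtt{OFF}(\mathcal{J})\le\lambda\,\mathtt{OFF}(\hat{\mathcal{J}})$, then $\eta_2\ge\big(1-(\lambda\gamma_{\mathrm{off}})^{1/\alpha}\big)^\alpha$.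
   Context: GES setting: single machine; a job is $(j,r_j,p_j)$ with identifier $j$, release time $r_j\ge0$, processing time $p_j>0$. A feasible schedule for job set $\mathcal{J}$ is a family $\{s_j(t)\}$ of nonnegative speeds with $s_j(t)=0$ for $t<r_j$ and $\int s_j=p_j$; total speed $s(t)=\sum_j s_j(t)$; energy $E(S)=\int s(t)^\alpha dt$ with $\alpha>1$; work profile $w^S_j(t)=p_j-\int_{r_j}^t s_j$. The quality cost $F(S,\mathcal{J})$ depends only on the work profiles and parameters of the jobs in $\mathcal{J}$ and is subadditive ($F(S,\mathcal{J}_1\cup\mathcal{J}_2)\le F(S,\mathcal{J}_1)+F(S,\mathcal{J}_2)$) and monotone (pointwise smaller work profiles give smaller $F$). $\mathrm{cost}(S,\mathcal{J})=E(S)+F(S,\mathcal{J})$ and $\mathtt{OPT}(\mathcal{J})$ is the minimum cost over feasible schedules ($\mathtt{OPT}(\emptyset)=0$). Predictions: a set $\hat{\mathcal{J}}$ of predicted jobs $(j,\hat r_j,\hat p_j)$. $\mathcal{J}\cap\hat{\mathcal{J}}$ denotes the correctly predicted jobs, i.e. jobs appearing in both sets with the same identifier and identical parameters; $\mathcal{J}\setminus\hat{\mathcal{J}}$ denotes the true jobs not in $\mathcal{J}\cap\hat{\mathcal{J}}$, and $\hat{\mathcal{J}}\setminus\mathcal{J}$ the predicted jobs not in $\mathcal{J}\cap\hat{\mathcal{J}}$. The error components are $\eta_1=\mathtt{OPT}(\mathcal{J}\setminus\hat{\mathcal{J}})/\mathtt{OPT}(\hat{\mathcal{J}})$ and $\eta_2=\mathtt{OPT}(\hat{\mathcal{J}}\setminus\mathcal{J})/\mathtt{OPT}(\hat{\mathcal{J}})$.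 *)

From HB Require Import structures.
From mathcomp Require Import all_boot all_order all_algebra finmap.
From mathcomp Require Import all_classical all_reals all_analysis.
Set Implicit Arguments. Unset Strict Implicit. Unset Printing Implicit Defensive.
Import Order.TTheory GRing.Theory Num.Theory.
Import numFieldNormedType.Exports.
Local Open Scope classical_set_scope.
Local Open Scope ring_scope.

Definition job (R : realType) := (nat * R * R)%type.
Definition jid {R : realType} (j : job R) : nat := j.1.1.
Definition rel {R : realType} (j : job R) : R := j.1.2.
Definition proc {R : realType} (j : job R) : R := j.2.

Definition valid_job {R : realType} (j : job R) := 0 <= rel j /\ 0 < proc j.
Definition valid_jobs {R : realType} (K : {fset job R}) :=
  forall j, j \in K -> valid_job j.

(* A schedule: speed s_j(t) of every job j at every time t. *)
Definition schedule (R : realType) := job R -> R -> R.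

Definition feasible {R : realType} (K : {fset job R}) (s : schedule R) :=
  forall j, j \in K ->
    [/\ (forall t, 0 <= s j t),
        (forall t, t < rel j -> s j t = 0),
        measurable_fun setT (s j) &
        (\int[lebesgue_measure]_t (s j t)%:E = (proc j)%:E)%E].

Definition energy {R : realType} (alpha : R) (K : {fset job R}) (s : schedule R)
  : \bar R :=
  (\int[lebesgue_measure]_t ((\sum_(j <- K) s j t) `^ alpha)%:E)%E.

Definition work {R : realType} (s : schedule R) : job R -> R -> R :=
  fun j t => proc j - fine (\int[lebesgue_measure]_(x in `[rel j, t]) (s j x)%:E)%E.

(* Quality cost: F K w, where w are the work profiles. *)
Definition quality_cost (R : realType) := {fset job R} -> (job R -> R -> R) -> \bar R.

Definition admissible_F {R : realType} (F : quality_cost R) :=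
  [/\
      (forall K w w', (forall j, j \in K -> forall t, w j t = w' j t) -> F K w = F K w'),
      (forall K w, (0 <= F K w)%E),
      (forall K1 K2 w, (F (K1 `|` K2)%fset w <= F K1 w + F K2 w)%E) &
      (* monotone: pointwise smaller work profiles (absent jobs = zero work) *)
      (forall K1 K2 w1 w2, (K1 `<=` K2)%fset ->
         (forall j, j \in K1 -> forall t, w1 j t <= w2 j t) ->
         (F K1 w1 <= F K2 w2)%E)].

Definition cost {R : realType} (alpha : R) (F : quality_cost R)
  (K : {fset job R}) (s : schedule R) : \bar R :=
  (energy alpha K s + F K (work s))%E.

Definition OPT {R : realType} (alpha : R) (F : quality_cost R) (K : {fset job R})
  : \bar R :=
  if K == fset0 then 0%E
  else ereal_inf [set cost alpha F K s | s in [set s | feasible K s]].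

Definition eta2 {R : realType} (alpha : R) (F : quality_cost R)
  (J Jh : {fset job R}) : \bar R :=
  (OPT alpha F (Jh `\` J)%fset / OPT alpha F Jh)%E.

From HB Require Import structures.
From mathcomp Require Import all_boot all_order all_algebra finmap.
From mathcomp Require Import all_classical all_reals all_analysis.
From mathcomp Require Import measurable_realfun ring.
Import Order.TTheory GRing.Theory Num.Theory.
Local Open Scope classical_set_scope.
Local Open Scope ring_scope.
Set Implicit Arguments. Unset Strict Implicit. Unset Printing Implicit Defensive.

(* Split Jh into J `&` Jh and Jh `\` J. Running schedules for the two parts side
   by side gives a schedule for Jh. Minkowski's inequality in L^alpha bounds its
   energy, subadditivity of F its quality cost, and the elementary inequality
   (e1^(1/alpha) + e2^(1/alpha))^alpha + f1 + f2
     <= ((e1 + f1)^(1/alpha) + (e2 + f2)^(1/alpha))^alpha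
   combines the two into
   OPT(Jh)^(1/alpha) <= OPT(J `&` Jh)^(1/alpha) + OPT(Jh `\` J)^(1/alpha),
   which is the first bound. For the second, monotonicity of the cost gives
   OPT(J `&` Jh) <= OFF(J) <= lambda OFF(Jh) <= lambda gamma OPT(Jh), and the
   first bound turns this upper bound into the lower bound on eta_2. *)

Section powR_inequalities.
Variable R : realType.
Implicit Types a b d o r u v x y : R.

Lemma powRVK r x : r != 0 -> 0 <= x -> (x `^ r^-1) `^ r = x.
Proof. by move=> r0 x0; rewrite -powRrM mulVf // powRr1. Qed.

Lemma powRKV r x : r != 0 -> 0 <= x -> (x `^ r) `^ r^-1 = x.
Proof. by move=> r0 x0; rewrite -powRrM mulfV // powRr1. Qed.

Lemma ge0_ler_powR2 r x y : 0 < r -> 0 <= x -> 0 <= y ->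
  (x `^ r <= y `^ r) = (x <= y).
Proof.
move=> r0 x0 y0; apply/idP/idP => [|xy]; last first.
  by apply: (ge0_ler_powR (ltW r0)); rewrite ?nnegrE.
by apply: contraTT; rewrite -!ltNge => yx; apply: gt0_ltr_powR; rewrite ?nnegrE.
Qed.

Lemma powR_invV r x : 0 <= x -> (x^-1) `^ r = (x `^ r)^-1.
Proof. by move=> x0; rewrite -powR_inv1 // -powRrM mulN1r powRN. Qed.

(* The increments of a convex function grow: [v] and [u + d] are convex
   combinations of [u] and [v + d] with complementary weights. *)
Lemma powR_increments r u v d : 1 <= r -> 0 <= u -> u <= v -> 0 <= d ->
  v `^ r + (u + d) `^ r <= u `^ r + (v + d) `^ r.
Proof.
move=> r1 u0 uv d0; have [->|d_neq0] := eqVneq d 0; first by rewrite !addr0 addrC.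
pose L := v + d - u.
have L_gt0 : 0 < L by rewrite /L subr_gt0 (le_lt_trans uv) // ltrDl lt_neqAle eq_sym d_neq0.
have u_itv : u \in (`[0, +oo[%classic : set R) by rewrite inE /= in_itv /= andbT.
have vd_itv : v + d \in (`[0, +oo[%classic : set R).
  by rewrite inE /= in_itv /= andbT addr_ge0 // (le_trans u0).
pose w := d / L.
have w0 : 0 <= w by rewrite divr_ge0 // ltW.
have w1 : w <= 1 by rewrite ler_pdivrMr // mul1r /L addrAC lerDr subr_ge0.
have w0' : 0 <= 1 - w by rewrite subr_ge0.
have w1' : 1 - w <= 1 by rewrite gerBl.
have cvx := convex_powR r1.
have h1 : (w * u + (1 - w) * (v + d)) `^ r <=
          w * u `^ r + (1 - w) * (v + d) `^ r := cvx (Itv01 w0 w1) _ _ u_itv vd_itv.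
have h2 : ((1 - w) * u + (1 - (1 - w)) * (v + d)) `^ r <=
          (1 - w) * u `^ r + (1 - (1 - w)) * (v + d) `^ r :=
  cvx (Itv01 w0' w1') _ _ u_itv vd_itv.
have hv : w * u + (1 - w) * (v + d) = v.
  by rewrite /w /L; field; rewrite -/L gt_eqF.
have hud : (1 - w) * u + (1 - (1 - w)) * (v + d) = u + d.
  by rewrite /w /L; field; rewrite -/L gt_eqF.
rewrite hv in h1; rewrite hud in h2.
apply: le_trans (lerD h1 h2) _; rewrite le_eqVlt; apply/orP; left.
by apply/eqP; ring.
Qed.

Lemma le_root_sum_powR r a b x y : 1 <= r ->
  0 <= a -> 0 <= b -> 0 <= x -> 0 <= y ->
  (a + b) `^ r + x + y <= ((a `^ r + x) `^ r^-1 + (b `^ r + y) `^ r^-1) `^ r.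
Proof.
move=> r1 a0 b0 x0 y0.
have r_gt0 : 0 < r by rewrite (lt_le_trans _ r1).
set A := (a `^ r + x) `^ r^-1; set B := (b `^ r + y) `^ r^-1.
have AK : A `^ r = a `^ r + x by rewrite powRVK ?gt_eqF // addr_ge0 // powR_ge0.
have BK : B `^ r = b `^ r + y by rewrite powRVK ?gt_eqF // addr_ge0 // powR_ge0.
have aA : a <= A.
  by rewrite -(ge0_ler_powR2 r_gt0 a0 (powR_ge0 _ _)) AK lerDl.
have bB : b <= B.
  by rewrite -(ge0_ler_powR2 r_gt0 b0 (powR_ge0 _ _)) BK lerDl.
have := powR_increments r1 a0 aA b0; rewrite AK -addrA lerD2l => h1.
have := powR_increments r1 b0 bB (powR_ge0 (a `^ r + x) r^-1).
rewrite BK -addrA lerD2l addrC [B + A]addrC => h2.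
by apply: le_trans h2; rewrite lerD2r addrC (addrC b).
Qed.

Lemma le_root_powR1 r x : 0 < r -> 0 <= x <= 1 -> x `^ r^-1 <= 1.
Proof.
move=> r0 /andP[x0 x1].
apply: (@le_trans _ _ (1 `^ r^-1)); last by rewrite powR1.
by rewrite ge0_ler_powR2 ?invr_gt0.
Qed.

Lemma onem_root_powR_le r o a b : 0 < r -> 0 < o -> 0 <= a -> 0 <= b -> b <= o ->
  o `^ r^-1 <= a `^ r^-1 + b `^ r^-1 -> (1 - (b / o) `^ r^-1) `^ r * o <= a.
Proof.
move=> r0 o0 a0 b0 bo le_roots.
have ri0 : 0 < r^-1 by rewrite invr_gt0.
have ro0 : 0 < o `^ r^-1 by rewrite powR_gt0.
have D0 : 0 <= o `^ r^-1 - b `^ r^-1 by rewrite subr_ge0 ge0_ler_powR2 // ltW.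
have -> : 1 - (b / o) `^ r^-1 = (o `^ r^-1 - b `^ r^-1) / o `^ r^-1.
  by rewrite mulrBl divff ?gt_eqF // powRM ?invr_ge0 ?(ltW o0) // powR_invV // ltW.
rewrite powRM ?invr_ge0 ?(ltW ro0) // powR_invV ?(ltW ro0) //.
rewrite powRVK ?gt_eqF ?(ltW o0) // divfK ?gt_eqF //.
by rewrite -(powRVK (lt0r_neq0 r0) a0) ge0_ler_powR2 ?powR_ge0 // lerBlDr.
Qed.

Lemma onem_root_powR_swap r x y : 0 < r -> 0 <= x <= 1 -> 0 <= y <= 1 ->
  (1 - x `^ r^-1) `^ r <= y -> (1 - y `^ r^-1) `^ r <= x.
Proof.
move=> r0 x01 y01 h; have [x0 _] := andP x01; have [y0 _] := andP y01.
have hx : 1 - x `^ r^-1 <= y `^ r^-1.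
  rewrite -(ge0_ler_powR2 r0 _ (powR_ge0 y r^-1)); last first.
    by rewrite subr_ge0 le_root_powR1.
  by rewrite powRVK // lt0r_neq0.
rewrite -(powRVK (lt0r_neq0 r0) x0) ge0_ler_powR2 ?powR_ge0 //; last first.
  by rewrite subr_ge0 le_root_powR1.
by rewrite lerBlDr addrC -lerBlDr.
Qed.

End powR_inequalities.

Section fset_sums.
Variables (T : choiceType) (R : numDomainType).
Implicit Types (A B K : {fset T}) (f : T -> R).

Lemma sum_fsubset_le A K f : (A `<=` K)%fset -> (forall j, j \in K -> 0 <= f j) ->
  \sum_(j <- A) f j <= \sum_(j <- K) f j.
Proof.
move=> /fsubsetP AK f0; rewrite [leRHS](big_fsetID _ (mem A)) /=.
rewrite [X in _ <= X + _](_ : _ = \sum_(j <- A) f j); last first.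
  by apply: eq_fbigl => j; rewrite !inE /= andb_idl // => /AK.
rewrite lerDl big_seq; apply: sumr_ge0 => j; rewrite !inE /= => /andP[jK _].
exact: f0.
Qed.

Lemma sum_fsetU_disjoint A B f : fdisjoint A B ->
  \sum_(j <- (A `|` B)%fset) f j = \sum_(j <- A) f j + \sum_(j <- B) f j.
Proof.
move=> /fdisjointP AB; rewrite (big_fsetID _ (mem A)) /=; congr (_ + _).
  by apply: eq_fbigl => j; rewrite !inE /= andb_idl // => ->.
apply: eq_fbigl => j; rewrite !inE /=.
by case: (boolP (j \in A)) => [jA|_]; rewrite ?(negbTE (AB j jA)) /= ?andbT.
Qed.

End fset_sums.

Lemma adde_ge0_EFin (R : realType) (x y : \bar R) (c : R) :
  (0 <= x)%E -> (0 <= y)%E -> (x + y)%E = c%:E ->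
  exists a b, [/\ x = a%:E, y = b%:E, 0 <= a, 0 <= b & c = a + b].
Proof.
case: x => [a||]; case: y => [b||] //=; rewrite !lee_fin => a0 b0 [<-].
by exists a, b.
Qed.

Lemma Lnorm_EFin_ge0 (R : realType) (p : R) (g : R -> R) : (forall t, 0 <= g t) ->
  Lnorm (@lebesgue_measure R) p%:E (EFin \o g) =
  ((\int[lebesgue_measure]_t ((g t) `^ p)%:E) `^ p^-1)%E.
Proof.
move=> g0; rewrite Lnorm.unlock; apply: (congr1 (poweR ^~ p^-1)).
by apply: eq_integral => t _; rewrite /= ger0_norm.
Qed.

Definition join_schedule (R : realType) (A : {fset job R}) (s1 s2 : schedule R)
  : schedule R := fun j => if j \in A then s1 j else s2 j.

Section schedules.
Variables (R : realType) (al : R) (F : quality_cost R).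
Hypotheses (al_gt1 : 1 < al) (aF : admissible_F F).
Implicit Types (A B K : {fset job R}) (s : schedule R).

Let al_neq0 : al != 0. Proof. by rewrite gt_eqF // (lt_trans _ al_gt1). Qed.
Let al_gt0 : 0 < al. Proof. by rewrite (lt_trans _ al_gt1). Qed.

Lemma energy_ge0 K s : (0 <= energy al K s)%E.
Proof. by apply: integral_ge0 => t _; rewrite lee_fin powR_ge0. Qed.

Lemma cost_ge0 K s : (0 <= cost al F K s)%E.
Proof. by case: aF => _ F0 _ _; rewrite adde_ge0 // energy_ge0. Qed.

Lemma OPT_ge0 K : (0 <= OPT al F K)%E.
Proof.
rewrite /OPT; case: ifP => // _.
by apply/ereal_infP => _ [s _ <-]; exact: cost_ge0.
Qed.

Lemma OPT_le_cost K s : K != fset0 -> feasible K s -> (OPT al F K <= cost al F K s)%E.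
Proof. by move=> K0 fs; rewrite /OPT (negbTE K0); apply: ereal_inf_lbound; exists s. Qed.

Lemma feasible_fsubset A K s : (A `<=` K)%fset -> feasible K s -> feasible A s.
Proof. by move=> /fsubsetP AK fs j /AK; exact: fs. Qed.

Lemma speed_sum_ge0 K s t : feasible K s -> 0 <= \sum_(j <- K) s j t.
Proof. by move=> fs; rewrite big_seq; apply: sumr_ge0 => j /fs[+ _ _ _]; apply. Qed.

Lemma measurable_speed_sum K s : feasible K s ->
  measurable_fun [set: R] (fun t => \sum_(j <- K) s j t).
Proof.
move=> fs; pose s' j t := if j \in K then s j t else 0.
have -> : (fun t => \sum_(j <- K) s j t) = (fun t => \sum_(j <- K) s' j t).
  by apply: funext => t; apply: eq_big_seq => j jK; rewrite /s' jK.
apply: (measurable_sum _ (h := s')) => j; rewrite /s'; case jK: (j \in K).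
  by case: (fs j jK).
exact: measurable_cst.
Qed.

Lemma cost_fsubset A K s : (A `<=` K)%fset -> feasible K s ->
  (cost al F A s <= cost al F K s)%E.
Proof.
move=> AK fs; have fsA := feasible_fsubset AK fs.
apply: leeD; last by case: aF => _ _ _ Fmon; exact: Fmon.
apply: ge0_le_integral => //.
- by move=> t _; rewrite lee_fin powR_ge0.
- apply/measurable_EFinP.
  exact: measurableT_comp (measurable_powR _) (measurable_speed_sum fsA).
- apply/measurable_EFinP.
  exact: measurableT_comp (measurable_powR _) (measurable_speed_sum fs).
move=> t _; rewrite lee_fin; apply: ge0_ler_powR; rewrite ?nnegrE ?speed_sum_ge0 ?(ltW al_gt0) //.
by apply: sum_fsubset_le => // j /fs[+ _ _ _]; apply.
Qed.

Lemma OPT_fsubset_le_cost A K s : (A `<=` K)%fset -> feasible K s ->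
  (OPT al F A <= cost al F K s)%E.
Proof.
move=> AK fs; have [->|A0] := eqVneq A fset0; first by rewrite /OPT eqxx cost_ge0.
exact: le_trans (OPT_le_cost A0 (feasible_fsubset AK fs)) (cost_fsubset AK fs).
Qed.

Lemma feasible_join A B s1 s2 : feasible A s1 -> feasible B s2 ->
  feasible (A `|` B)%fset (join_schedule A s1 s2).
Proof.
move=> fs1 fs2 j; rewrite inE /join_schedule.
by case: ifP => [jA _|_ /= jB]; [exact: fs1|exact: fs2].
Qed.

Lemma speed_sum_join A B s1 s2 t : fdisjoint A B ->
  \sum_(j <- (A `|` B)%fset) join_schedule A s1 s2 j t =
  \sum_(j <- A) s1 j t + \sum_(j <- B) s2 j t.
Proof.
move=> AB; rewrite sum_fsetU_disjoint //; congr (_ + _); apply: eq_fbigr => j jX _.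
  by rewrite /join_schedule jX.
by rewrite /join_schedule (negbTE (fdisjointP_sym AB j jX)).
Qed.

Lemma energy_join_root_le A B s1 s2 : fdisjoint A B ->
  feasible A s1 -> feasible B s2 ->
  (energy al (A `|` B)%fset (join_schedule A s1 s2) `^ al^-1 <=
   energy al A s1 `^ al^-1 + energy al B s2 `^ al^-1)%E.
Proof.
move=> AB fs1 fs2.
have n1 t : 0 <= \sum_(j <- A) s1 j t := speed_sum_ge0 t fs1.
have n2 t : 0 <= \sum_(j <- B) s2 j t := speed_sum_ge0 t fs2.
have n12 t : 0 <= \sum_(j <- A) s1 j t + \sum_(j <- B) s2 j t := addr_ge0 (n1 t) (n2 t).
have -> : energy al (A `|` B)%fset (join_schedule A s1 s2) =
    (\int[lebesgue_measure]_t
      ((\sum_(j <- A) s1 j t + \sum_(j <- B) s2 j t) `^ al)%:E)%E.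
  by apply: eq_integral => t _; rewrite speed_sum_join.
have := minkowski_EFin lebesgue_measure (measurable_speed_sum fs1)
  (measurable_speed_sum fs2) (ltW al_gt1).
by rewrite (Lnorm_EFin_ge0 al n1) (Lnorm_EFin_ge0 al n2) (Lnorm_EFin_ge0 al n12).
Qed.

Lemma quality_join_le A B s1 s2 : fdisjoint A B ->
  (F (A `|` B)%fset (work (join_schedule A s1 s2)) <=
   F A (work s1) + F B (work s2))%E.
Proof.
move=> AB; case: aF => Fdep _ Fsub _; apply: le_trans (Fsub _ _ _) _.
rewrite (Fdep A _ (work s1)) => [|j jA t]; last by rewrite /work /join_schedule jA.
rewrite (Fdep B _ (work s2)) // => j jB t.
by rewrite /work /join_schedule (negbTE (fdisjointP_sym AB j jB)).
Qed.

Lemma cost_join_le A B s1 s2 c1 c2 : fdisjoint A B ->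
  feasible A s1 -> feasible B s2 ->
  cost al F A s1 = c1%:E -> cost al F B s2 = c2%:E ->
  (cost al F (A `|` B)%fset (join_schedule A s1 s2) <=
   ((c1 `^ al^-1 + c2 `^ al^-1) `^ al)%:E)%E.
Proof.
move=> AB fs1 fs2 c1E c2E; have [_ F0 _ _] := aF.
have [e1 [f1 [e1E f1E e1_ge0 f1_ge0 ->]]] :=
  adde_ge0_EFin (energy_ge0 A s1) (F0 A (work s1)) c1E.
have [e2 [f2 [e2E f2E e2_ge0 f2_ge0 ->]]] :=
  adde_ge0_EFin (energy_ge0 B s2) (F0 B (work s2)) c2E.
have := energy_join_root_le AB fs1 fs2; rewrite e1E e2E !poweR_EFin -EFinD.
have := energy_ge0 (A `|` B)%fset (join_schedule A s1 s2).
case eE: (energy _ _ _) => [e| |] //=; last by rewrite invr_eq0 (negbTE al_neq0).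
rewrite !lee_fin => e_ge0 e_root.
have e_le : e <= (e1 `^ al^-1 + e2 `^ al^-1) `^ al.
  by rewrite -(powRVK al_neq0 e_ge0) ge0_ler_powR2 ?addr_ge0 ?powR_ge0.
rewrite /cost eE; apply: le_trans (leeD (lexx _) (quality_join_le s1 s2 AB)) _.
rewrite f1E f2E -!EFinD lee_fin.
have := le_root_sum_powR (ltW al_gt1) (powR_ge0 e1 al^-1) (powR_ge0 e2 al^-1)
  f1_ge0 f2_ge0.
rewrite (powRVK al_neq0 e1_ge0) (powRVK al_neq0 e2_ge0).
by apply: le_trans; rewrite addrA !lerD2r.
Qed.

Lemma OPT_root_ge K o L : K != fset0 -> OPT al F K = o%:E ->
  (forall s c, feasible K s -> cost al F K s = c%:E -> L <= c `^ al^-1) ->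
  L <= o `^ al^-1.
Proof.
move=> K0 oE Lc; have [L_le0|L_gt0] := lerP L 0.
  by apply: le_trans L_le0 _; rewrite powR_ge0.
have ai_gt0 : 0 < al^-1 by rewrite invr_gt0.
have o_ge0 : 0 <= o by rewrite -lee_fin -oE OPT_ge0.
rewrite -(powRKV al_neq0 (ltW L_gt0)) ge0_ler_powR2 ?powR_ge0 // -lee_fin -oE.
rewrite /OPT (negbTE K0); apply/ereal_infP => _ [s fs <-].
have := cost_ge0 K s; case cE: (cost _ _ _ _) => [c| |] //= c_ge0; last by rewrite leey.
rewrite lee_fin -(powRVK al_neq0 c_ge0) ge0_ler_powR2 ?powR_ge0 ?(ltW L_gt0) //.
exact: Lc fs cE.
Qed.

Lemma OPT_root_subadd A B o a b : fdisjoint A B ->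
  OPT al F (A `|` B)%fset = o%:E -> OPT al F A = a%:E -> OPT al F B = b%:E ->
  o `^ al^-1 <= a `^ al^-1 + b `^ al^-1.
Proof.
move=> AB oE aE bE.
have [A0|A0] := eqVneq A fset0.
  move: oE; rewrite A0 fset0U bE => -[->]; by rewrite lerDr powR_ge0.
have [B0|B0] := eqVneq B fset0.
  move: oE; rewrite B0 fsetU0 aE => -[->]; by rewrite lerDl powR_ge0.
have AB0 : (A `|` B)%fset != fset0 by rewrite fsetU_eq0 negb_and A0.
have ai_gt0 : 0 < al^-1 by rewrite invr_gt0.
have o_ge0 : 0 <= o by rewrite -lee_fin -oE OPT_ge0.
suff : o `^ al^-1 - a `^ al^-1 <= b `^ al^-1 by rewrite lerBlDl.
apply: (OPT_root_ge B0 bE) => s2 c2 fs2 c2E; rewrite lerBlDl addrC -lerBlDl.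
apply: (OPT_root_ge A0 aE) => s1 c1 fs1 c1E; rewrite lerBlDl.
have := le_trans (OPT_le_cost AB0 (feasible_join fs1 fs2)) (cost_join_le AB fs1 fs2 c1E c2E).
rewrite oE lee_fin -(ge0_ler_powR2 ai_gt0 o_ge0 (powR_ge0 _ _)).
rewrite powRKV //; last by rewrite addr_ge0 ?powR_ge0.
by rewrite addrC.
Qed.

Lemma OPT_fsetI_ge J Jh o b : 0 < o ->
  OPT al F Jh = o%:E -> OPT al F (Jh `\` J)%fset = b%:E -> b <= o ->
  (((1 - (b / o) `^ al^-1) `^ al * o)%:E <= OPT al F (J `&` Jh)%fset)%E.
Proof.
move=> o_gt0 oE bE b_le_o; have := OPT_ge0 (J `&` Jh)%fset.
case aE: (OPT _ _ _) => [a| |] //= a_ge0; last by rewrite leey.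
rewrite lee_fin; apply: onem_root_powR_le => //; first by rewrite -lee_fin -bE OPT_ge0.
apply: (OPT_root_subadd _ _ aE bE); last by rewrite fsetIC fsetID.
by apply/fdisjointP => j; rewrite !inE => /andP[-> _].
Qed.

Lemma eta2_le1E J Jh o : 0 < o -> OPT al F Jh = o%:E -> (eta2 al F J Jh <= 1)%E ->
  exists b, [/\ OPT al F (Jh `\` J)%fset = b%:E, eta2 al F J Jh = (b / o)%:E
              & 0 <= b / o <= 1].
Proof.
move=> o_gt0 oE; have := OPT_ge0 (Jh `\` J)%fset.
rewrite /eta2 oE inver gt_eqF //; case: (OPT _ _ _) => [b| |] //= b_ge0.
  rewrite -EFinM lee_fin => b_le; exists b; split => //.
  by rewrite b_le divr_ge0 // -lee_fin ?ltW.
by rewrite gt0_mulye ?lte_fin ?invr_gt0 // leye_eq.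
Qed.

End schedules.

Theorem corollary1 (R : realType) (alpha : R) (F : quality_cost R)
  (J Jh : {fset job R}) :
  1 < alpha -> admissible_F F ->
  valid_jobs J -> valid_jobs Jh ->
  (0 < OPT alpha F Jh < +oo)%E ->
  (eta2 alpha F J Jh <= 1)%E ->
  ((((1 - (fine (eta2 alpha F J Jh)) `^ alpha^-1) `^ alpha)%:E * OPT alpha F Jh
      <= OPT alpha F (J `&` Jh)%fset)%E
   /\
   forall (OfflineAlg : {fset job R} -> schedule R) (gamma_off lambda : R),
     (forall K, valid_jobs K -> feasible K (OfflineAlg K)) ->
     (forall K, valid_jobs K ->
        (cost alpha F K (OfflineAlg K) <= gamma_off%:E * OPT alpha F K)%E) ->
     0 < lambda <= 1 -> lambda * gamma_off <= 1 ->
     (cost alpha F J (OfflineAlg J) <= lambda%:E * cost alpha F Jh (OfflineAlg Jh))%E ->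
     (((1 - (lambda * gamma_off) `^ alpha^-1) `^ alpha)%:E <= eta2 alpha F J Jh)%E).
Proof.
move=> al_gt1 aF vJ vJh /andP[OPT_gt0 OPT_fin] eta_le1.
have [oJh oJhE] : exists oJh, OPT alpha F Jh = oJh%:E.
  by exists (fine (OPT alpha F Jh)); rewrite fineK // ge0_fin_numE ?ltW.
rewrite oJhE lte_fin in OPT_gt0.
have [b [bE etaE ratio01]] := eta2_le1E aF OPT_gt0 oJhE eta_le1.
have b_le_o : b <= oJh by case/andP: ratio01 => _; rewrite ler_pdivrMr // mul1r.
have lower := OPT_fsetI_ge al_gt1 aF OPT_gt0 oJhE bE b_le_o.
split; first by rewrite etaE oJhE -EFinM.
move=> Off gam lam Off_feas Off_comp /andP[lam_gt0 _] lamgam_le1 OFF_le.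
have OPT_le : (OPT alpha F (J `&` Jh)%fset <= (lam * gam * oJh)%:E)%E.
  apply: le_trans (OPT_fsubset_le_cost al_gt1 aF (fsubsetIl J Jh) (Off_feas J vJ)) _.
  apply: le_trans OFF_le _; rewrite -mulrA !EFinM -oJhE.
  by apply: lee_wpmul2l; [rewrite lee_fin ltW|exact: Off_comp].
have := le_trans lower OPT_le; rewrite lee_fin ler_pM2r // => le_lamgam.
have lamgam01 : 0 <= lam * gam <= 1.
  by rewrite lamgam_le1 (le_trans (powR_ge0 _ _) le_lamgam).
rewrite etaE lee_fin; apply: onem_root_powR_swap ratio01 lamgam01 le_lamgam.
by rewrite (lt_trans _ al_gt1).
Qed.
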